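(* Let $(X,U)$ be a minimizer of Problem 1 (defined in the context). Then: (a) The linear matrix equation $$\begin{bmatrix} K & H \\ G & F \end{bmatrix}\begin{bmatrix} X \\ Z \end{bmatrix} = \begin{bmatrix} U \\ V \end{bmatrix}$$ has a unique solution $(K,H,G,F)$ with $K\in\mathbb{R}^{m\times n}$, $H\in\mathbb{R}^{m\times n(N-1)}$, $G\in\mathbb{R}^{n(N-1)\times n}$, $F\in\mathbb{R}^{n(N-1)\times n(N-1)}$. (b) For every initial state $x_0\in\mathbb{R}^n$, the closed loop of the plant $x(t+1)=Ax(t)+Bu(t)$, $x(0)=x_0$, with the compensator $z(t+1)=Fz(t)+Gx(t)$, $u(t)=Hz(t)+Kx(t)$, $z(0)=0$, generates the input sequence $u(t)=U(\mathrm{e}_{t+1}\otimes x_0)$ and state sequence $x(t)=X(\mathrm{e}_{t+1}\otimes x_0)$ for $t=0,1,\dots,N-1$ (where $\mathrm{e}_{t+1}\in\mathbb{R}^N$), and it drives the plant state to $x(N)=0$. (c) For every $x_0\in\{\mathrm{e}_1,\dots,\mathrm{e}_n\}$ (standard basis of $\mathbb{R}^n$), the output $y(t)=Cx(t)+Du(t)$ of this closed loop satisfies $-s\le y(t)\le s$ (componentwise) for $t=0,1,\dots,N-1$. (d) The closed-loop augmented system $\psi(t+1)=\mathcal{A}_{cl}\psi(t)$, with $\psi=(x,z)$ and $\mathcal{A}_{cl}=\begin{bmatrix}A+BK & BH\\ G & F\end{bmatrix}$, is internally stable (i.e. $\mathcal{A}_{cl}$ is Schur stable).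
   Context: Plant: discrete-time LTI system $x(t+1)=Ax(t)+Bu(t)$, $y(t)=Cx(t)+Du(t)$, with $x(t)\in\mathbb{R}^n$, $u(t)\in\mathbb{R}^m$ ($m\le n$), $y(t)\in\mathbb{R}^p$, real constant matrices $A,B,C,D$ of compatible sizes, and $(A,B)$ reachable. $N\ge 2$ is a horizon length. $\mathrm{e}_j$ denotes the $j$-th standard basis vector of the appropriate dimension. $P\in\mathbb{R}^{N\times N}$ is the nilpotent shift matrix $P=\begin{bmatrix}0 & 0\\ I_{N-1} & 0\end{bmatrix}$ (so $P\mathrm{e}_j=\mathrm{e}_{j+1}$ for $j<N$ and $P\mathrm{e}_N=0$). $\otimes$ is the Kronecker product. For a matrix $W$, $\|W\|_1=\sum_{i,j}|w_{ij}|$, and $\mathrm{abs}(W)$ is the entrywise absolute value. $\mathbf{1}_k\in\mathbb{R}^k$ is the all-ones vector. Given $s\in\mathbb{R}^p$ (componentwise nonnegative), Problem 1 is: minimize $\|U\|_1$ over $X\in\mathbb{R}^{n\times nN}$, $U\in\mathbb{R}^{m\times nN}$ subject to $AX+BU=X(P\otimes I_n)$, $X(\mathrm{e}_1\otimes I_n)=I_n$ (with $\mathrm{e}_1\in\mathbb{R}^N$), and $\mathrm{abs}(CX+DU)\le s(\mathbf{1}_n\otimes\mathbf{1}_N)^\top$ entrywise. Define $Z=\begin{bmatrix}0_{n(N-1)\times n} & I_{n(N-1)}\end{bmatrix}\in\mathbb{R}^{n(N-1)\times nN}$ and $V=Z(P\otimes I_n)$. *)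

(* Reals modelled by an arbitrary real closed field R
   (contains the real numbers as a special case); complex numbers R[i]
   from mathcomp-real-closed; Kronecker product = tensmx ( *t ) from
   mathcomp-real-closed's mxtens (row index (i,j) |-> i*p + j, the standard
   Kronecker layout). *)
From HB Require Import structures.
From mathcomp Require Import all_boot all_order all_algebra.
From mathcomp Require Import mxtens complex.
Set Implicit Arguments.
Unset Strict Implicit.
Unset Printing Implicit Defensive.
Import Order.TTheory GRing.Theory Num.Theory.
Local Open Scope ring_scope.

Section Defs.
Variable R : rcfType.

(* e_(j+1) in R^N : standard basis column vector, 0-based index j
   (so ebas N 0 is e_1). *)
Definition ebas (N j : nat) : 'cV[R]_N := \col_(i < N) ((i : nat) == j)%:R.

Definition shiftP (N : nat) : 'M[R]_N :=
  \matrix_(i < N, j < N) ((i : nat) == j.+1)%:R.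

(* Z = [0_{n(N-1) x n}  I_{n(N-1)}] in R^{n(N-1) x nN}. *)
Definition Zsel (n N : nat) : 'M[R]_(N.-1 * n, N * n) :=
  \matrix_(i, j) ((j : nat) == (i + n)%N)%:R.

Definition Vmat (n N : nat) : 'M[R]_(N.-1 * n, N * n) :=
  Zsel n N *m (shiftP N *t (1%:M : 'M[R]_n)).

Definition l1norm (a b : nat) (W : 'M[R]_(a, b)) : R :=
  \sum_(i < a) \sum_(j < b) `|W i j|.

(* (A,B) reachable: the columns of [B AB ... A^(n-1)B] span R^n, i.e. the
   row spaces of the (A^k B)^T, k < n, sum up to the whole space. *)
Definition reachable (n m : nat) (A : 'M[R]_n) (B : 'M[R]_(n, m)) : Prop :=
  (\sum_(k < n) <<(A ^+ k *m B)^T>> == 1%:M :> 'M[R]_n)%MS.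

Definition feasible (n m p N : nat) (A : 'M[R]_n) (B : 'M[R]_(n, m))
    (C : 'M[R]_(p, n)) (D : 'M[R]_(p, m)) (s : 'cV[R]_p)
    (X : 'M[R]_(n, N * n)) (U : 'M[R]_(m, N * n)) : Prop :=
  [/\ A *m X + B *m U = X *m (shiftP N *t (1%:M : 'M[R]_n)),
      castmx (erefl n, mul1n n) (X *m (ebas N 0 *t (1%:M : 'M[R]_n))) = 1%:M &
      forall i j, `|(C *m X + D *m U) i j| <= s i 0].

Definition minimizer (n m p N : nat) (A : 'M[R]_n) (B : 'M[R]_(n, m))
    (C : 'M[R]_(p, n)) (D : 'M[R]_(p, m)) (s : 'cV[R]_p)
    (X : 'M[R]_(n, N * n)) (U : 'M[R]_(m, N * n)) : Prop :=
  feasible A B C D s X U /\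
  forall (X' : 'M[R]_(n, N * n)) (U' : 'M[R]_(m, N * n)), feasible A B C D s X' U' -> l1norm U <= l1norm U'.

Fixpoint cl_traj (n m q : nat) (A : 'M[R]_n) (B : 'M[R]_(n, m))
    (K : 'M[R]_(m, n)) (H : 'M[R]_(m, q)) (G : 'M[R]_(q, n)) (F : 'M[R]_q)
    (x0 : 'cV[R]_n) (t : nat) : 'cV[R]_n * 'cV[R]_q :=
  match t with
  | 0 => (x0, 0)
  | t'.+1 =>
      let: (x, z) := cl_traj A B K H G F x0 t' in
      let u := H *m z + K *m x in
      (A *m x + B *m u, F *m z + G *m x)
  end.

Definition cl_x n m q A B K H G F x0 t : 'cV[R]_n :=
  (@cl_traj n m q A B K H G F x0 t).1.
Definition cl_z n m q A B K H G F x0 t : 'cV[R]_q :=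
  (@cl_traj n m q A B K H G F x0 t).2.
Definition cl_u n m q A B K H G F x0 t : 'cV[R]_m :=
  H *m (@cl_z n m q A B K H G F x0 t) + K *m (@cl_x n m q A B K H G F x0 t).

Definition schur_stable (k : nat) (M : 'M[R]_k) : Prop :=
  forall lam : R[i], eigenvalue (map_mx (fun x : R => (x%:C)%C) M) lam -> `|lam| < 1.

End Defs.

From HB Require Import structures.
From mathcomp Require Import all_boot all_order all_algebra.
From mathcomp Require Import mxtens complex.
Import Order.TTheory GRing.Theory Num.Theory.
Set Implicit Arguments.
Unset Strict Implicit.
Unset Printing Implicit Defensive.
Local Open Scope ring_scope.

(* Only feasibility of (X,U) is used.
   Write N = N'+1 and split the columns of X as [X1 X2] with X1 the first
   n-block.  The initial condition of Problem 1 says X1 = I, and Z = [0 I], so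
   T = [X; Z] = [I X2; 0 I] is invertible.  Hence the linear matrix equation
   [K H; G F] T = [U; V] has the unique solution [U; V] T^-1, which gives (a).
   With Q = P (x) I_n, the constraints of Problem 1 and V = Z Q say exactly that
   the closed-loop matrix Acl satisfies Acl T = T Q and u = [K H] [x; z].  Thus
   the closed loop started at (x0, 0) = T (e_1 (x) x0) evolves as
   T (e_(t+1) (x) x0), which gives (b) (e_(N+1) = 0) and, reading off the
   entries of C X + D U, also (c).  Finally Q is nilpotent (P^N = 0), so its
   similar matrix Acl is nilpotent, and a nilpotent matrix has only the
   eigenvalue 0, which gives (d). *)

Section GenericMatrix.
Variable R : comUnitRingType.

Lemma unitriangular_unitmx k l (W : 'M[R]_(k, k + l)) :
  lsubmx W = 1%:M -> col_mx W (row_mx 0 1%:M) \in unitmx.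
Proof.
move=> W1; pose Winv := block_mx 1%:M (- rsubmx W) 0 1%:M : 'M[R]_(k + l).
suff /mulmx1_unit [] : col_mx W (row_mx 0 1%:M) *m Winv = 1%:M by [].
rewrite -[W in col_mx W _]hsubmxK W1 -block_mxEv mulmx_block.
by rewrite !mul1mx !mulmx1 !mul0mx !mulmx0 !addr0 add0r addNr -scalar_mx_block.
Qed.

Lemma block_equation_unique k1 k2 l1 l2 (T : 'M[R]_(k1 + k2))
    (Y : 'M[R]_(l1 + l2, k1 + k2)) (K' : 'M_(l1, k1)) H' G' F' :
  T \in unitmx -> block_mx K' H' G' F' *m T = Y ->
  let M := Y *m invmx T in
  [/\ K' = ulsubmx M, H' = ursubmx M, G' = dlsubmx M & F' = drsubmx M].
Proof.
move=> uT E M; have : block_mx K' H' G' F' = M by rewrite /M -E -mulmxA mulmxV ?mulmx1.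
by rewrite -{1}(submxK M) => /eq_block_mx.
Qed.

Lemma intertwined_nilpotent k (M T Q : 'M[R]_k) q :
  T \in unitmx -> M *m T = T *m Q -> Q ^+ q = 0 -> M ^+ q = 0.
Proof.
move=> uT MT Qq.
have MkT j : M ^+ j *m T = T *m Q ^+ j.
  elim: j => [|j IH]; first by rewrite !expr0 mul1mx mulmx1.
  by rewrite !exprS -!mulmxE -mulmxA IH !mulmxA MT.
by rewrite -[M ^+ q]mulmx1 -(mulmxV uT) mulmxA MkT Qq mulmx0 mul0mx.
Qed.

End GenericMatrix.

Lemma tensmx_exp (R : comPzRingType) k l (M : 'M[R]_k) (L : 'M[R]_l) j :
  (M *t L) ^+ j.+1 = M ^+ j.+1 *t L ^+ j.+1.
Proof.
elim: j => [|j IH]; first by rewrite !expr1.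
by rewrite exprS IH -mulmxE tensmx_mul !mulmxE -!exprS.
Qed.

(* A nilpotent real matrix has 0 as its only complex eigenvalue, so it is
   Schur stable. *)
Lemma nilpotent_schur_stable (R : rcfType) k (M : 'M[R]_k) q :
  M ^+ q = 0 -> schur_stable M.
Proof.
move=> Mq a /eigenvalueP [v Hv vn0].
have Mj j : v *m map_mx (real_complex R) (M ^+ j) = a ^+ j *: v.
  elim: j => [|j IH]; first by rewrite !expr0 map_mx1 mulmx1 scale1r.
  by rewrite exprSr -mulmxE map_mxM mulmxA IH -scalemxAl Hv scalerA -exprSr.
have := Mj q; rewrite Mq map_mx0 mulmx0 => /eqP.
rewrite eq_sym scaler_eq0 (negbTE vn0) orbF expf_eq0 => /andP [_ /eqP ->].
by rewrite normr0 ltr01.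
Qed.

Section KroneckerStructure.
Variable R : rcfType.

Lemma sum_mxtens N n (F : 'I_(N * n) -> R) :
  \sum_(l < N * n) F l = \sum_(a < N) \sum_(b < n) F (mxtens_index (a, b)).
Proof.
rewrite pair_bigA /= (reindex (@mxtens_index N n)) /=; first by apply: eq_bigr => -[].
by exists (@mxtens_unindex N n) => x _; [apply: mxtens_indexK | apply: mxtens_unindexK].
Qed.

(* The t-th block of n columns of W, i.e. W (e_(t+1) (x) I_n). *)
Definition colblock r N n (W : 'M[R]_(r, N * n)) (t : 'I_N) : 'M[R]_(r, n) :=
  \matrix_(i, j) W i (mxtens_index (t, j)).

Lemma mul_ebas_tens r N n c (W : 'M[R]_(r, N * n)) (t : 'I_N) (Y : 'M[R]_(n, c)) :
  W *m (ebas R N t *t Y) = castmx (erefl r, esym (mul1n c)) (colblock W t *m Y).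
Proof.
apply/matrixP => i k; rewrite castmxE /= !mxE.
case: (mxtens_indexP k) => k1 k2.
rewrite sum_mxtens (bigD1 t) //= [X in _ + X]big1 ?addr0.
  apply: eq_bigr => b _; rewrite tensmxE !mxE eqxx mul1r.
  by congr (W _ _ * Y _ _); apply: val_inj; rewrite /= ?[k1]ord1 ?mul0n ?add0n.
move=> a /negPf ne_at; apply: big1 => b _; rewrite tensmxE !mxE.
by rewrite (_ : (a : nat) == t = false) ?mul0r ?mulr0 //; apply: ne_at.
Qed.

Lemma mul_ebas_tens_col r N n (W : 'M[R]_(r, N * n)) (t : 'I_N) (x0 : 'cV[R]_n) :
  W *m (ebas R N t *t x0) = colblock W t *m x0.
Proof.
rewrite mul_ebas_tens; apply/matrixP => i j; rewrite castmxE.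
by congr (_ _ _); apply: val_inj.
Qed.

Lemma colblock0 r N' n (W : 'M[R]_(r, N'.+1 * n)) :
  colblock W ord0 = lsubmx (W : 'M_(r, n + N' * n)).
Proof. by apply/matrixP => i j; rewrite !mxE; congr (W _ _); apply: val_inj. Qed.

Lemma mul_ebas0_tens r N' n (W : 'M[R]_(r, N'.+1 * n)) (x0 : 'cV[R]_n) :
  W *m (ebas R N'.+1 0 *t x0) = lsubmx (W : 'M_(r, n + N' * n)) *m x0.
Proof. by rewrite (mul_ebas_tens_col W ord0) colblock0. Qed.

Lemma initial_block N' n (X : 'M[R]_(n, N'.+1 * n)) :
  castmx (erefl n, mul1n n) (X *m (ebas R N'.+1 0 *t (1%:M : 'M[R]_n))) = 1%:M ->
  lsubmx (X : 'M_(n, n + N' * n)) = 1%:M.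
Proof.
rewrite -colblock0 (mul_ebas_tens X ord0) mulmx1 => <-.
by apply/matrixP => i j; rewrite !castmxE; congr (_ _ _); apply: val_inj.
Qed.

Lemma Zsel_row N' n : Zsel R n N'.+1 = row_mx 0 1%:M :> 'M_(N' * n, n + N' * n).
Proof.
apply/matrixP => i j; rewrite !mxE; case: splitP => k ->; rewrite !mxE.
  by rewrite ltn_eqF // (leq_trans (ltn_ord k)) // leq_addl.
by rewrite addnC eqn_add2r eq_sym.
Qed.

(* The vector e_(t+1) of R^N vanishes once t >= N; this is the deadbeat. *)
Lemma ebas_ge N t : (N <= t)%N -> ebas R N t = 0.
Proof.
by move=> h; apply/matrixP => i j; rewrite !mxE ltn_eqF // (leq_trans (ltn_ord i)).
Qed.

Lemma shiftP_ebas N t : shiftP R N *m ebas R N t = ebas R N t.+1.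
Proof.
apply/matrixP => i j; rewrite !mxE; under eq_bigr do rewrite !mxE.
have [tN | Nt] := ltnP t N; last first.
  rewrite big1 => [|k _]; first by rewrite ltn_eqF // (leq_trans (ltn_ord i)) // ltnW.
  by rewrite (@ltn_eqF k t) ?mulr0 // (leq_trans (ltn_ord k)).
rewrite (bigD1 (Ordinal tN)) //= big1 ?eqxx ?mulr1 ?addr0 // => k /negPf ne_kt.
by rewrite (_ : (k : nat) == t = false) ?mulr0 //; apply: ne_kt.
Qed.

Lemma shiftP_tens_ebas N n t (x0 : 'cV[R]_n) :
  (shiftP R N *t (1%:M : 'M[R]_n)) *m (ebas R N t *t x0) = ebas R N t.+1 *t x0.
Proof. by rewrite tensmx_mul shiftP_ebas mul1mx. Qed.

Lemma shiftP_nilpotent N : shiftP R N ^+ N = 0.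
Proof.
have Pk k t : shiftP R N ^+ k *m ebas R N t = ebas R N (t + k).
  elim: k => [|k IH]; first by rewrite expr0 mul1mx addn0.
  by rewrite exprS -mulmxE -mulmxA IH shiftP_ebas addnS.
apply/matrixP => i j; have /matrixP/(_ i 0) := Pk N j.
rewrite (_ : ebas R N j = delta_mx j 0); last first.
  by apply/matrixP => a b; rewrite !mxE [b]ord1 eqxx andbT.
rewrite -colE !mxE => ->.
by rewrite ltn_eqF // (leq_trans (ltn_ord i)) // leq_addl.
Qed.

End KroneckerStructure.

Section ClosedLoop.
Variables (R : rcfType) (n m q k : nat).
Variables (A : 'M[R]_n) (B : 'M[R]_(n, m)).
Variables (K : 'M[R]_(m, n)) (H : 'M[R]_(m, q)) (G : 'M[R]_(q, n)) (F : 'M[R]_q).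
Variables (X : 'M[R]_(n, k)) (Z : 'M[R]_(q, k)) (U : 'M[R]_(m, k)) (Q : 'M[R]_k).

(* The plant constraint of Problem 1 and the two block rows of the linear
   matrix equation, for a general "generator" Q. *)
Hypothesis plant : A *m X + B *m U = X *m Q.
Hypothesis input_row : K *m X + H *m Z = U.
Hypothesis compensator_row : G *m X + F *m Z = Z *m Q.

Lemma closed_loop_traj (x0 : 'cV[R]_n) (w : nat -> 'cV[R]_k) :
  X *m w 0%N = x0 -> Z *m w 0%N = 0 -> (forall t, w t.+1 = Q *m w t) ->
  forall t, [/\ cl_x A B K H G F x0 t = X *m w t,
                cl_z A B K H G F x0 t = Z *m w t &
                cl_u A B K H G F x0 t = U *m w t].
Proof.
move=> X0 Z0 wS.
have ut x z t : x = X *m w t -> z = Z *m w t -> H *m z + K *m x = U *m w t.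
  by move=> -> ->; rewrite !mulmxA -mulmxDl addrC input_row.
suff xz t : cl_x A B K H G F x0 t = X *m w t /\ cl_z A B K H G F x0 t = Z *m w t.
  by move=> t; have [hx hz] := xz t; split=> //; rewrite /cl_u (ut _ _ t).
elim: t => [|t]; first by rewrite X0 Z0.
rewrite /cl_x /cl_z /=; case: (cl_traj _ _ _ _ _ _ _ _) => x z /= [hx hz].
by rewrite (ut x z t) // hx hz wS !mulmxA -!mulmxDl plant addrC compensator_row.
Qed.

Lemma closed_loop_intertwines :
  block_mx (A + B *m K) (B *m H) G F *m col_mx X Z = col_mx X Z *m Q.
Proof.
rewrite mul_block_col mul_col_mx -plant -input_row compensator_row.
by rewrite mulmxDl mulmxDr !mulmxA addrA.
Qed.

End ClosedLoop.

Theorem theorem1 (R : rcfType) (n m p N : nat)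
    (A : 'M[R]_n) (B : 'M[R]_(n, m)) (C : 'M[R]_(p, n)) (D : 'M[R]_(p, m))
    (s : 'cV[R]_p) (X : 'M[R]_(n, N * n)) (U : 'M[R]_(m, N * n)) :
  (m <= n)%N -> (2 <= N)%N -> reachable A B ->
  (forall i, 0 <= s i 0) ->
  minimizer A B C D s X U ->
  exists (K : 'M[R]_(m, n)) (H : 'M[R]_(m, N.-1 * n))
         (G : 'M[R]_(N.-1 * n, n)) (F : 'M[R]_(N.-1 * n)),
    (* (a) (K,H,G,F) solves the linear matrix equation ... *)
    block_mx K H G F *m col_mx X (Zsel R n N) = col_mx U (Vmat R n N) /\
    (* ... and is its unique solution *)
    (forall (K' : 'M[R]_(m, n)) (H' : 'M[R]_(m, N.-1 * n))
            (G' : 'M[R]_(N.-1 * n, n)) (F' : 'M[R]_(N.-1 * n)),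
       block_mx K' H' G' F' *m col_mx X (Zsel R n N) = col_mx U (Vmat R n N) ->
       [/\ K' = K, H' = H, G' = G & F' = F]) /\
    (* (b) closed-loop trajectories and deadbeat *)
    (forall x0 : 'cV[R]_n,
       (forall t, (t < N)%N ->
          cl_u A B K H G F x0 t = U *m (ebas R N t *t x0) /\
          cl_x A B K H G F x0 t = X *m (ebas R N t *t x0)) /\
       cl_x A B K H G F x0 N = 0) /\
    (* (c) output constraints for x0 in {e_1,...,e_n} *)
    (forall (j : 'I_n) (t : nat), (t < N)%N ->
       forall k : 'I_p,
         let x0 := delta_mx j 0 : 'cV[R]_n in
         let y := C *m cl_x A B K H G F x0 t + D *m cl_u A B K H G F x0 t in
         - s k 0 <= y k 0 <= s k 0) /\
    (* (d) internal stability of the closed loop *)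
    schur_stable (block_mx (A + B *m K) (B *m H) G F).
Proof.
case: N X U => [//|N'] X U _ _ _ _ [[plant init output] _].
pose T := col_mx X (Zsel R n N'.+1); pose Q := shiftP R N'.+1 *t (1%:M : 'M[R]_n).
have X1 := initial_block init.
have uT : T \in unitmx by rewrite /T Zsel_row; exact: unitriangular_unitmx.
pose M := col_mx U (Vmat R n N'.+1) *m invmx T.
exists (ulsubmx M), (ursubmx M), (dlsubmx M), (drsubmx M).
set K := ulsubmx M; set H := ursubmx M; set G := dlsubmx M; set F := drsubmx M.
have lme : block_mx K H G F *m T = col_mx U (Vmat R n N'.+1).
  by rewrite submxK /M -mulmxA mulVmx ?mulmx1.
have [input_row compensator_row] : K *m X + H *m Zsel R n N'.+1 = U /\
    G *m X + F *m Zsel R n N'.+1 = Zsel R n N'.+1 *m Q.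
  by apply: eq_col_mx; rewrite -mul_block_col.
have X_start (x0 : 'cV[R]_n) : X *m (ebas R N'.+1 0 *t x0) = x0.
  by rewrite mul_ebas0_tens X1 mul1mx.
have Z_start (x0 : 'cV[R]_n) : Zsel R n N'.+1 *m (ebas R N'.+1 0 *t x0) = 0.
  by rewrite mul_ebas0_tens Zsel_row row_mxKl mul0mx.
have traj (x0 : 'cV[R]_n) := closed_loop_traj (w := fun t => ebas R N'.+1 t *t x0)
  plant input_row compensator_row (X_start x0) (Z_start x0)
  (fun t => esym (shiftP_tens_ebas _ t x0)).
split; first exact: lme.
split; first by move=> K' H' G' F' /(block_equation_unique uT).
split.
  move=> x0; split; first by move=> t _; have [-> _ ->] := traj x0 t.
  by have [-> _ _] := traj x0 N'.+1; rewrite ebas_ge // tens0mx mulmx0.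
split.
  move=> j t tN k /=; have [-> _ ->] := traj (delta_mx j 0) t.
  have := output k (mxtens_index (Ordinal tN, j)).
  by rewrite !mulmxA -mulmxDl (mul_ebas_tens_col _ (Ordinal tN)) -colE !mxE ler_norml.
apply: (@nilpotent_schur_stable _ _ _ N'.+1).
apply: (intertwined_nilpotent uT (closed_loop_intertwines plant input_row compensator_row)).
by rewrite /Q (tensmx_exp (shiftP R N'.+1)) shiftP_nilpotent tens0mx.
Qed.
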